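(* Fix constants $c > 0$ and $c' > 0$ and consider RLS-GP with $F = \{\mathrm{AND}, \mathrm{OR}\}$, $L = \{x_1, \ldots, x_n\}$, tree size limit $\ell \ge n$, target $h \in \{\mathrm{AND}_n, \mathrm{OR}_n\}$, evaluating solutions in each iteration on a fresh training set of $s \ge n^{c} \lg^2 n$ inputs sampled uniformly at random from $\{0,1\}^n$, and terminating when the sampled error of its current solution is at most $c' \lg n$. Then, with high probability, within any polynomial number of iterations no solution with a generalisation error greater than $n^{-c}$ has a sampled error of at most $c' \lg n$ on the training set of that iteration.
   Context: Programs are finite rooted binary trees (the empty tree is allowed) whose internal nodes are labelled by binary Boolean functions from $F$ and whose leaves are labelled by literals from $L$; a program computes a Boolean function of $(x_1,\dots,x_n)$ in the obvious way. $\mathrm{AND}_n(x) = x_1 \wedge \dots \wedge x_n$, $\mathrm{OR}_n(x) = x_1 \vee \dots \vee x_n$. The generalisation error of $X$ is $|\{x \in \{0,1\}^n : X(x) \ne h(x)\}|/2^n$. In each iteration a fresh training set of $s$ inputs is drawn independently and uniformly at random from $\{0,1\}^n$; the sampled error $f(X)$ of a program $X$ in that iteration is the number of sampled inputs on which $X$ differs from $h$; parent and offspring are evaluated on the same training set. LeafCount$(X)$ is the number of leaves. HVL-Prime with subtree deletion, applied to a tree $X$: choose $op \in \{\mathrm{INS}, \mathrm{DEL}, \mathrm{SUB}\}$, a literal $l \in L$ and a function $g \in F$, independently and uniformly at random. If $X$ is empty, the result is the single leaf $l$. Otherwise: if $op = \mathrm{INS}$, choose a node $x$ of $X$ uniformly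 at random and replace it by a new node labelled $g$ whose two children are the subtree rooted at $x$ and a new leaf $l$, in uniformly random order; if $op = \mathrm{DEL}$, choose a node $x$ of $X$ (leaf or internal) uniformly at random and replace the parent of $x$ by the sibling of $x$; if $op = \mathrm{SUB}$, choose a leaf of $X$ uniformly at random and replace it by $l$. RLS-GP with tree size limit $\ell$: start with the empty tree $X$; in each iteration let $X' := $ HVL-Prime$(X)$, and if LeafCount$(X') \le \ell$ and $f(X') \le f(X)$ then set $X := X'$. $\lg$ is the base-2 logarithm; ''with high probability'' means with probability tending to $1$ as $n \to \infty$. *)

From HB Require Import structures.
From mathcomp Require Import all_boot all_order all_algebra.
From mathcomp Require Import all_classical all_reals all_analysis.
Set Implicit Arguments. Unset Strict Implicit. Unset Printing Implicit Defensive.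
Import Order.TTheory GRing.Theory Num.Theory.
Import numFieldNormedType.Exports.
Local Open Scope ring_scope.

Inductive gate := GAnd | GOr.
Definition gate_eval (g : gate) (a b : bool) : bool :=
  match g with GAnd => a && b | GOr => a || b end.

(* Non-empty trees; a leaf [Leaf i] is the literal x_{i+1} (0-based index). *)
Inductive tree := Leaf of nat | Node of gate & tree & tree.
(* A program is a possibly empty tree: [None] is the empty tree. *)
Definition prog := option tree.

Fixpoint teval (x : seq bool) (t : tree) : bool :=
  match t with
  | Leaf i => nth false x i
  | Node g l r => gate_eval g (teval x l) (teval x r)
  end.

Fixpoint nnodes (t : tree) : nat :=
  match t with Leaf _ => 1 | Node _ l r => (nnodes l + nnodes r).+1 end.
Fixpoint nleaves (t : tree) : nat :=
  match t with Leaf _ => 1 | Node _ l r => (nleaves l + nleaves r)%N end.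
Definition LeafCount (X : prog) : nat :=
  match X with None => 0 | Some t => nleaves t end.

(* Nodes are indexed 0 .. nnodes t - 1 in preorder (root = 0). *)
Fixpoint ins_at (t : tree) (i : nat) (g : gate) (l : nat) (b : bool) : tree :=
  if i == 0%N then (if b then Node g t (Leaf l) else Node g (Leaf l) t) else
  match t with
  | Leaf _ => t
  | Node g' tl tr =>
      if (i.-1 < nnodes tl)%N then Node g' (ins_at tl i.-1 g l b) tr
      else Node g' tl (ins_at tr (i.-1 - nnodes tl) g l b)
  end.

(* DEL at node i: replace the parent of node i by the sibling of node i.
   If node i is the root (it has no parent), the result is the empty tree. *)
Fixpoint del_at (t : tree) (i : nat) : prog :=
  match t with
  | Leaf _ => if i == 0%N then None else Some t
  | Node g tl tr =>
      if i == 0%N then None else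
      if (i.-1 < nnodes tl)%N then
        (if i.-1 == 0%N then Some tr
         else Some (Node g (if del_at tl i.-1 is Some t' then t' else tl) tr))
      else
        (if (i.-1 - nnodes tl)%N == 0%N then Some tl
         else Some (Node g tl (if del_at tr (i.-1 - nnodes tl) is Some t' then t' else tr)))
  end.

(* SUB at leaf j (leaves indexed left to right): replace it by the leaf l. *)
Fixpoint sub_at (t : tree) (j : nat) (l : nat) : tree :=
  match t with
  | Leaf _ => Leaf l
  | Node g tl tr =>
      if (j < nleaves tl)%N then Node g (sub_at tl j l) tr
      else Node g tl (sub_at tr (j - nleaves tl) l)
  end.

Section Prob.
Variable R : realType.

(* Expectation of F (HVL-Prime with subtree deletion applied to X) with
   L = {x_1..x_n}: op, l, g uniform and independent; then a uniform node
   (INS/DEL) or leaf (SUB), and a uniform child order (INS). *)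
Definition exp_mut (n : nat) (X : prog) (F : prog -> R) : R :=
  match X with
  | None => (n%:R)^-1 * \sum_(l < n) F (Some (Leaf l))
  | Some t =>
      (3 * n%:R * 2)^-1 * \sum_(l < n) \sum_(g <- [:: GAnd; GOr])
        ( ((nnodes t)%:R * 2)^-1 * \sum_(i < nnodes t)
              (F (Some (ins_at t i g l true)) + F (Some (ins_at t i g l false)))
        + ((nnodes t)%:R)^-1 * \sum_(i < nnodes t) F (del_at t i)
        + ((nleaves t)%:R)^-1 * \sum_(j < nleaves t) F (Some (sub_at t j l)) )
  end.

Definition target (hand : bool) (x : seq bool) : bool :=
  if hand then all id x else has id x.

(* X differs from h on input x (the empty program is taken to be wrong on
   every input). *)
Definition differs (hand : bool) (X : prog) (x : seq bool) : bool :=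
  match X with None => true | Some t => teval x t != target hand x end.

Definition sampled_err (n s : nat) (hand : bool) (X : prog)
    (S : s.-tuple (n.-tuple bool)) : nat :=
  count (fun x : n.-tuple bool => differs hand X x) S.

Definition gen_err (n : nat) (hand : bool) (X : prog) : R :=
  (#|[set x : n.-tuple bool | differs hand X x]|)%:R / (2 ^ n)%:R.

Definition lg (x : R) : R := ln x / ln 2.

Definition bad_eval (c c' : R) (n : nat) (hand : bool) (X : prog) (f : nat) : bool :=
  (n%:R `^ (- c) < gen_err n hand X) && (f%:R <= c' * lg n%:R).

(* Probability that, running RLS-GP (with termination) from X for (at most)
   T iterations, no evaluated solution (parent or offspring) of any iteration
   is bad on that iteration's training set. *)
Fixpoint good_prob (c c' : R) (n : nat) (hand : bool) (ell s : nat)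
    (T : nat) (X : prog) : R :=
  match T with
  | 0 => 1
  | T'.+1 =>
      ((2 ^ (n * s))%:R)^-1 * \sum_(S : s.-tuple (n.-tuple bool))
        exp_mut n X (fun X' =>
          let fX := sampled_err hand X S in
          let fX' := sampled_err hand X' S in
          if bad_eval c c' n hand X fX || bad_eval c c' n hand X' fX' then 0 else
          let acc := (LeafCount X' <= ell)%N && (fX' <= fX)%N in
          let Xn := if acc then X' else X in
          let fn := if acc then fX' else fX in
          if fn%:R <= c' * lg n%:R then 1
          else good_prob c c' n hand ell s T' Xn)
  end.

End Prob.

(* Fix a program X whose generalisation error p exceeds n^-c.  On a fresh
   training set its sampled error is a sum of s independent Bernoulli(p)
   variables, so by the exponential Markov inequality it is at most c' lg n
   with probability at most exp(c' lg n - p s / 2) <= exp(c' lg n - lg^2 n / 2),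
   because p s >= n^-c n^c lg^2 n.  The offspring is created independently of
   the training set, so the same bound applies to it, and a union bound over
   the two evaluations of each of the T <= (n+1)^k iterations bounds the
   failure probability by exp(O(lg n) - lg^2 n / 2), which tends to 0. *)

From HB Require Import structures.
From mathcomp Require Import all_boot all_order all_algebra.
From mathcomp Require Import all_classical all_reals all_analysis.
From mathcomp Require Import ring lra zify.
Import Order.TTheory GRing.Theory Num.Theory.
Import numFieldNormedType.Exports.
Set Implicit Arguments. Unset Strict Implicit. Unset Printing Implicit Defensive.
Local Open Scope ring_scope.

Section Sums.
Variable R : comPzRingType.

Lemma sumr_affine (I : Type) (r : seq I) (a : R) (f g : I -> R) :
  \sum_(i <- r) (a * f i + g i) = a * \sum_(i <- r) f i + \sum_(i <- r) g i.
Proof. by rewrite big_split mulr_sumr. Qed.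

Lemma prodr_if_count (T : eqType) (D : pred T) (r : R) (xs : seq T) :
  \prod_(x <- xs) (if D x then r else 1) = r ^+ count D xs.
Proof.
elim: xs => [|x xs IHxs]; first by rewrite big_nil.
by rewrite big_cons IHxs /=; case: (D x); rewrite ?exprS ?mul1r.
Qed.

Lemma sum_tuple_prod (T : finType) (f : T -> R) m :
  \sum_(xs : m.-tuple T) \prod_(x <- xs) f x = (\sum_x f x) ^+ m.
Proof.
elim: m => [|m IHm].
  rewrite expr0 (eq_bigr (fun _ => 1)) => [|xs _]; last by rewrite tuple0 big_nil.
  by rewrite sumr_const card_tuple expn0.
rewrite (reindex (fun p : T * m.-tuple T => [tuple of p.1 :: p.2])) /=; last first.
  apply: onW_bij; exists (fun xs => (thead xs, [tuple of behead xs])).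
    by case=> x xs /=; rewrite theadE; congr pair; apply: val_inj.
  by move=> xs; rewrite [RHS]tuple_eta.
rewrite -(pair_bigA _ (fun x (xs : m.-tuple T) => \prod_(y <- x :: xs) f y)) /=.
rewrite exprS -IHm mulr_suml; apply: eq_bigr => x _.
by rewrite mulr_sumr; apply: eq_bigr => xs _; rewrite big_cons.
Qed.

Lemma sum_if_card (T : finType) (D : pred T) (r : R) :
  \sum_x (if D x then r else 1) = #|T|%:R - (1 - r) * #|[set x | D x]|%:R.
Proof.
have -> : (#|T|%:R : R) = \sum_(x : T) 1 by rewrite sumr_const.
rewrite -sum1dep_card natr_sum mulr_sumr [\sum_(x | D x) _]big_mkcond -sumrB.
by apply: eq_bigr => x _; case: (D x); ring.
Qed.

End Sums.

Section Mutation.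
Variables (R : realType) (n : nat).
Implicit Types (X : prog) (F G : prog -> R).

Lemma exp_mut_affine X (a : R) F G :
  exp_mut n X (fun y => a * F y + G y) = a * exp_mut n X F + exp_mut n X G.
Proof.
case: X => [t|] /=; last by rewrite sumr_affine; ring.
set c1 := ((nnodes t)%:R * 2)^-1; set c2 := ((nnodes t)%:R)^-1.
set c3 := ((nleaves t)%:R)^-1.
have regroup (A1 A2 A3 B1 B2 B3 : R) :
  c1 * (a * A1 + B1) + c2 * (a * A2 + B2) + c3 * (a * A3 + B3) =
  a * (c1 * A1 + c2 * A2 + c3 * A3) + (c1 * B1 + c2 * B2 + c3 * B3) by ring.
have sumr_affine2 (f f' g g' : 'I_(nnodes t) -> R) :
    \sum_i (a * f i + g i + (a * f' i + g' i)) =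
    a * \sum_i (f i + f' i) + \sum_i (g i + g' i).
  by rewrite -sumr_affine; apply: eq_bigr => i _; ring.
under eq_bigr do under eq_bigr do rewrite sumr_affine2 !sumr_affine regroup.
under eq_bigr do rewrite sumr_affine.
rewrite sumr_affine; ring.
Qed.

Lemma exp_mut0 X : exp_mut n X (fun _ => 0 : R) = 0.
Proof.
have := exp_mut_affine X (-1) (fun _ => 0) (fun _ => 0).
by rewrite mulr0 addr0 mulN1r addNr.
Qed.

Lemma exp_mutD X F G :
  exp_mut n X (fun y => F y + G y) = exp_mut n X F + exp_mut n X G.
Proof.
rewrite -[exp_mut n X F]mul1r -exp_mut_affine.
by congr (exp_mut n X _); apply: funext => y; rewrite mul1r.
Qed.

Lemma exp_mutZ X (a : R) F :
  exp_mut n X (fun y => a * F y) = a * exp_mut n X F.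
Proof.
rewrite -[RHS]addr0 -(exp_mut0 X) -exp_mut_affine.
by congr (exp_mut n X _); apply: funext => y; rewrite addr0.
Qed.

Lemma exp_mut_sum X (I : Type) (r : seq I) (f : I -> prog -> R) :
  exp_mut n X (fun y => \sum_(i <- r) f i y) = \sum_(i <- r) exp_mut n X (f i).
Proof.
elim: r => [|i r IHr].
  by under eq_fun do rewrite big_nil; rewrite big_nil exp_mut0.
by under eq_fun do rewrite big_cons; rewrite exp_mutD IHr big_cons.
Qed.

Lemma ler_exp_mut X F G :
  (forall y, F y <= G y) -> exp_mut n X F <= exp_mut n X G.
Proof.
move=> FG; case: X => [t|] /=; apply: ler_wpM2l; rewrite ?invr_ge0 ?mulr_ge0 //;
  apply: ler_sum => l _ //; apply: ler_sum => g _.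
do 2?[apply: lerD]; apply: ler_wpM2l; rewrite ?invr_ge0 ?mulr_ge0 //;
  apply: ler_sum => i _ //; exact: lerD.
Qed.

Lemma nnodes_gt0 t : (0 < nnodes t)%N. Proof. by case: t. Qed.

Lemma nleaves_gt0 t : (0 < nleaves t)%N.
Proof. by elim: t => //= g l IHl r _; rewrite ltn_addr. Qed.

Lemma exp_mut_cst X (a : R) : (0 < n)%N -> exp_mut n X (fun _ => a) = a.
Proof.
have natr_neq0 m : (0 < m)%N -> (m%:R : R) != 0 by rewrite pnatr_eq0 -lt0n.
move=> /natr_neq0 nR0; case: X => [t|] /=; rewrite !sumr_const !card_ord.
  have tR0 := natr_neq0 _ (nnodes_gt0 t); have lR0 := natr_neq0 _ (nleaves_gt0 t).
  by rewrite !big_cons big_nil; field; rewrite tR0 lR0 nR0.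
by field.
Qed.

Lemma exp_mut_cstB X (a : R) F :
  (0 < n)%N -> exp_mut n X (fun y => a - F y) = a - exp_mut n X F.
Proof.
move=> n_gt0; transitivity (exp_mut n X (fun y => -1 * F y + a)).
  by congr (exp_mut n X _); apply: funext => y; rewrite mulN1r addrC.
by rewrite exp_mut_affine exp_mut_cst // mulN1r addrC.
Qed.

End Mutation.

Section TrainingSets.
Variables (R : realType) (n s : nat).
Local Notation trainset := (s.-tuple (n.-tuple bool)).
Implicit Types (f g : trainset -> R) (D : pred (n.-tuple bool)).

Definition avg_train f : R := ((2 ^ (n * s))%:R)^-1 * \sum_(S : trainset) f S.

Definition density D : R := #|[set x | D x]|%:R / (2 ^ n)%:R.

Lemma avg_train_cst (a : R) : avg_train (fun _ => a) = a.
Proof.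
rewrite /avg_train sumr_const !card_tuple card_bool -expnM -[a *+ _]mulr_natr.
by rewrite mulrCA mulVf ?mulr1 // pnatr_eq0 expn_eq0.
Qed.

Lemma ler_avg_train f g : (forall S, f S <= g S) -> avg_train f <= avg_train g.
Proof. by move=> fg; apply: ler_wpM2l; [rewrite invr_ge0 | exact: ler_sum]. Qed.

Lemma avg_trainB f g : avg_train (fun S => f S - g S) = avg_train f - avg_train g.
Proof. by rewrite /avg_train sumrB mulrBr. Qed.

Lemma avg_trainZ (a : R) f : avg_train (fun S => a * f S) = a * avg_train f.
Proof. by rewrite /avg_train -mulr_sumr mulrCA. Qed.

Lemma density_ge0 D : 0 <= density D.
Proof. by rewrite divr_ge0. Qed.

Lemma density_le1 D : density D <= 1.
Proof.
rewrite ler_pdivrMr ?ltr0n ?expn_gt0 // mul1r ler_nat.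
by apply: leq_trans (max_card _) _; rewrite card_tuple card_bool.
Qed.

Lemma avg_train_pow_count D (r : R) :
  avg_train (fun S => r ^+ count D S) = (1 - (1 - r) * density D) ^+ s.
Proof.
rewrite /avg_train; under eq_bigr do rewrite -prodr_if_count.
rewrite sum_tuple_prod sum_if_card card_tuple card_bool expnM natrX -exprVn -exprMn.
by congr (_ ^+ _); rewrite /density; field; rewrite pnatr_eq0 expn_eq0.
Qed.

Lemma avg_train_count_le D (a : R) :
  avg_train (fun S => ((count D S)%:R <= a)%R%:R) <=
  expR (a - density D * s%:R / 2).
Proof.
set r : R := expR (-1).
have r_gt0 : 0 < r := expR_gt0 _.
have e_ge2 : 2 <= expR (1 : R) by have := expR_ge1Dx (1 : R); lra.
have r_le_half : r <= 1 / 2 by have := expRxMexpNx_1 (1 : R); rewrite -/r; nra.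
have markov (S : trainset) : ((count D S)%:R <= a)%R%:R <= expR a * r ^+ count D S.
  rewrite /r -expRM_natr -expRD.
  case: (leP (count D S)%:R a) => [le_a|_] /=; rewrite ?mulr1n ?mulr0n ?expR_ge0 //.
  by apply: le_trans _ (expR_ge1Dx _); lra.
apply: le_trans (ler_avg_train markov) _.
rewrite avg_trainZ avg_train_pow_count.
have := density_ge0 D; have := density_le1 D; set p := density D => p_le1 p_ge0.
apply: le_trans (_ : expR a * expR (- (1 - r) * p) ^+ s <= _).
  apply: ler_wpM2l; first exact: expR_ge0.
  apply: lerXn2r; rewrite ?nnegrE ?expR_ge0 //; first nra.
  by apply: le_trans _ (expR_ge1Dx _); lra.
have ps_ge0 : 0 <= p * s%:R by rewrite mulr_ge0.
rewrite -expRM_natr -expRD ler_expR; nra.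
Qed.

Lemma avg_train_bad_eval (c c' : R) hand X :
  (0 < n)%N -> n%:R `^ c * lg n%:R ^+ 2 <= s%:R ->
  avg_train (fun S => (bad_eval c c' n hand X (sampled_err hand X S))%:R) <=
  expR (c' * lg n%:R - lg n%:R ^+ 2 / 2).
Proof.
move=> n_gt0 s_large; set u := lg n%:R.
have [err_large|err_small] := boolP (n%:R `^ (- c) < gen_err R n hand X); last first.
  rewrite /bad_eval (negbTE err_small) avg_train_cst; exact: expR_ge0.
apply: (le_trans
  (y := avg_train (fun S => ((sampled_err hand X S)%:R <= c' * u)%R%:R))).
  by apply: ler_avg_train => S; rewrite /bad_eval err_large /=.
apply: le_trans (avg_train_count_le (differs hand X) (c' * u)) _.
rewrite ler_expR lerD2l lerN2 ler_pM2r // -/(gen_err R n hand X).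
have pow_gt0 : 0 < n%:R `^ c :> R by rewrite powR_gt0 // ltr0n.
apply: le_trans (_ : n%:R `^ (- c) * (n%:R `^ c * u ^+ 2) <= _).
  by rewrite mulrA powRN mulVf ?mul1r // gt_eqF.
apply: le_trans (_ : gen_err R n hand X * (n%:R `^ c * u ^+ 2) <= _).
  by apply: ler_wpM2r; [rewrite mulr_ge0 ?powR_ge0 ?sqr_ge0 | exact: ltW].
by apply: ler_wpM2l; first exact: density_ge0.
Qed.

End TrainingSets.

Arguments avg_train {R} n s f.

Lemma exp_mut_avg_train (R : realType) n s X
    (f : s.-tuple (n.-tuple bool) -> prog -> R) :
  exp_mut n X (fun y => avg_train n s (f^~ y)) =
  avg_train n s (fun S => exp_mut n X (f S)).
Proof. by rewrite exp_mutZ exp_mut_sum. Qed.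

Section UnionBound.
Variables (R : realType) (c c' delta : R) (n : nat) (hand : bool) (ell s : nat).
Local Notation trainset := (s.-tuple (n.-tuple bool)).

Definition bad_ind X (S : trainset) : R :=
  (bad_eval c c' n hand X (sampled_err hand X S))%:R.

Definition rls_step T X (S : trainset) X' : R :=
  let fX := sampled_err hand X S in
  let fX' := sampled_err hand X' S in
  if bad_eval c c' n hand X fX || bad_eval c c' n hand X' fX' then 0 else
  let acc := (LeafCount X' <= ell)%N && (fX' <= fX)%N in
  if (if acc then fX' else fX)%:R <= c' * lg n%:R then 1
  else good_prob c c' n hand ell s T (if acc then X' else X).

Lemma good_probS T X :
  good_prob c c' n hand ell s T.+1 X =
  avg_train n s (fun S => exp_mut n X (rls_step T X S)).
Proof. by []. Qed.

Hypothesis n_gt0 : (0 < n)%N.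

Lemma good_prob_le1 T X : good_prob c c' n hand ell s T X <= 1.
Proof.
elim: T X => [|T IH] X; first exact: lexx.
rewrite good_probS -(avg_train_cst n s 1).
apply: ler_avg_train => S; rewrite -(exp_mut_cst X 1 n_gt0).
apply: ler_exp_mut => X'; rewrite /rls_step.
case: ifP => _; first exact: ler01.
by case: ifP => _ //; exact: IH.
Qed.

Hypothesis delta_ge0 : 0 <= delta.
Hypothesis bad_eval_rare : forall X, avg_train n s (bad_ind X) <= delta.

Lemma good_prob_ge T X : 1 - 2 * T%:R * delta <= good_prob c c' n hand ell s T X.
Proof.
elim: T X => [|T IH] X; first by rewrite /= mulr0 mul0r subr0.
set L := 1 - 2 * T%:R * delta.
have L_le1 : L <= 1 by rewrite /L gerBl !mulr_ge0 // ler0n.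
have step_ge S X' : L - bad_ind X S - bad_ind X' S <= rls_step T X S X'.
  rewrite /rls_step /bad_ind.
  case: (bad_eval _ _ _ _ X _); case: (bad_eval _ _ _ _ X' _) => /=; try lra.
  by case: ifP => _; [lra | rewrite !subr0; exact: IH].
rewrite good_probS.
apply: le_trans _ (ler_avg_train (fun S => ler_exp_mut n X (step_ge S))).
have -> : (fun S => exp_mut n X (fun X' => L - bad_ind X S - bad_ind X' S)) =
          (fun S => L - bad_ind X S - exp_mut n X (bad_ind^~ S)).
  by apply: funext => S; rewrite exp_mut_cstB.
(* X' is drawn independently of S, so the two averages commute. *)
rewrite avg_trainB avg_trainB avg_train_cst -exp_mut_avg_train.
apply: le_trans (_ : L - delta - delta <= _); first by rewrite /L -natr1; lra.
apply: lerB; first exact: (lerB (lexx L) (bad_eval_rare X)).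
by rewrite -(exp_mut_cst X delta n_gt0); apply: ler_exp_mut => X'; exact: bad_eval_rare.
Qed.

End UnionBound.

Section Asymptotics.
Variable R : realType.

Let ln2_gt0 : 0 < ln (2 : R). Proof. by rewrite ln_gt0 // ltr1n. Qed.

Lemma lg_natr_ge (M : R) : exists N, forall n, (N <= n)%N -> M <= lg n%:R.
Proof.
exists (Num.truncn (expR (M * ln 2))).+1 => n le_Nn.
have n_gt : expR (M * ln 2) < n%:R.
  by apply: lt_le_trans (truncnS_gt _) _; rewrite ler_nat.
rewrite /lg ler_pdivlMr // -ler_expR lnK ?posrE; first exact: ltW.
exact: lt_trans (expR_gt0 _) n_gt.
Qed.

Lemma expR_quadratic_le (A B eps : R) : 0 < eps ->
  exists M, forall u, M <= u -> expR (A + B * u - u ^+ 2 / 2) <= eps.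
Proof.
move=> eps_gt0; set l := ln eps.
exists (1 + 2 * (`|A| + `|B| + `|l|)) => u le_Mu.
rewrite -(lnK (x := eps)) ?posrE // ler_expR -/l.
have u_ge1 : 1 <= u.
  by apply: le_trans le_Mu; rewrite lerDl !mulr_ge0 ?addr_ge0.
have uM : u * (1 + 2 * (`|A| + `|B| + `|l|)) <= u * u.
  by rewrite ler_wpM2l // (le_trans ler01).
have hA : `|A| <= `|A| * u by rewrite ler_peMr.
have hB : B * u <= `|B| * u by rewrite ler_wpM2r ?ler_norm // (le_trans ler01).
have hl : `|l| <= `|l| * u by rewrite ler_peMr.
have := ler_norm A; have := ler_norm (- l); rewrite normrN; nra.
Qed.

Lemma failure_bound_le (k T n : nat) (c' : R) : (0 < n)%N -> (T <= n.+1 ^ k)%N ->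
  2 * T%:R * expR (c' * lg n%:R - lg n%:R ^+ 2 / 2) <=
  expR (ln 2 * (1 + k%:R) + (ln 2 * k%:R + c') * lg n%:R - lg n%:R ^+ 2 / 2).
Proof.
move=> n_gt0 T_le; set u := lg (n%:R : R).
have n_eq : (n%:R : R) = expR (ln 2 * u).
  by rewrite /u /lg mulrC divfK ?gt_eqF // lnK // posrE ltr0n.
have two_eq : (2 : R) = expR (ln 2) by rewrite lnK // posrE.
(* T <= (n + 1)^k <= (2 n)^k = 2^(k (1 + lg n)) *)
have T_le_exp : (T%:R : R) <= expR (ln 2 * (1 + u)) ^+ k.
  apply: le_trans (_ : ((n.+1)%:R : R) ^+ k <= _); first by rewrite -natrX ler_nat.
  apply: lerXn2r; rewrite ?nnegrE ?ler0n ?expR_ge0 //.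
  rewrite mulrDr mulr1 expRD -two_eq -n_eq -natrM ler_nat; lia.
apply: le_trans (_ : expR (ln 2) * expR (ln 2 * (1 + u)) ^+ k *
                     expR (c' * u - u ^+ 2 / 2) <= _).
  by rewrite -two_eq; apply: ler_wpM2r; [exact: expR_ge0 | apply: ler_wpM2l].
rewrite -expRM_natr -!expRD ler_expR; nra.
Qed.

End Asymptotics.

Local Open Scope classical_set_scope.
Local Open Scope ring_scope.

Theorem lemma11 (R : realType) (c c' : R) (k : nat)
    (T ell s : nat -> nat) (hand : nat -> bool) :
  0 < c -> 0 < c' ->
  (forall n, T n <= n.+1 ^ k)%N ->
  (forall n, n <= ell n)%N ->
  (forall n, (n%:R `^ c) * (lg (n%:R : R)) ^+ 2 <= (s n)%:R) ->
  (fun n => good_prob c c' n (hand n) (ell n) (s n) (T n) None) @ \oo --> (1 : R).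
Proof.
move=> _ _ T_poly _ s_large; apply/cvgrPdist_le => eps eps_gt0.
have [M bound_le] := expR_quadratic_le (ln 2 * (1 + k%:R)) (ln 2 * k%:R + c') eps_gt0.
have [N lg_ge] := lg_natr_ge M.
exists N.+1 => // n /= le_Nn; have n_gt0 : (0 < n)%N by apply: leq_trans le_Nn.
have rare X := avg_train_bad_eval c' (hand n) X n_gt0 (s_large n).
have good_ge := good_prob_ge (ell n) n_gt0 (expR_ge0 _) rare (T n) None.
rewrite ger0_norm ?subr_ge0; last exact: good_prob_le1.
apply: le_trans (_ : 2 * (T n)%:R * expR (c' * lg n%:R - lg n%:R ^+ 2 / 2) <= _).
  by rewrite lerBlDr -lerBlDl.
apply: le_trans (failure_bound_le c' n_gt0 (T_poly n)) _.
by apply: bound_le; apply: lg_ge; exact: ltnW.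
Qed.
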